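(* Let $(S,\sqcup,\cap)$ be an ado-semilattice and let $I$ be a relatively maximal $\lesssim$-ideal of $S$. Define $E_I=\{(a,b)\in S\times S: a\notin I,\ b\notin I,\ a\curlyvee b\notin I\}$ and $\epsilon_I=E_I\cup(I\times I)$, where $a\curlyvee b=(a\sqcup b)\cap(b\sqcup a)$. Then $\epsilon_I$ is a congruence of the ado-semilattice $(S,\sqcup,\cap)$ and $S/\epsilon_I$ is a flat ado-semilattice. Moreover, $S$ is a subdirect product of the algebras $S/\epsilon_I$ as $I$ ranges over all relatively maximal $\lesssim$-ideals of $S$.
   Context: An o-semilattice is an algebra $(L,\cap,\sqcup)$ such that $(L,\cap)$ is a semilattice and, with $x\leq y$ iff $x=x\cap y$, for all $x,y,z$: (i) $x\leq x\sqcup y$; (ii) $(x\cap y)\sqcup(y\cap z)\leq y$; (iii) $x\sqcup y\leq x\sqcup(y\cap(x\sqcup y))$; (iv) $x\cap z\leq(x\cap y)\sqcup z$. It is distributive if $(a\cap d)\sqcup((b\cap d)\cap(c\cap d))=((a\cap d)\sqcup(b\cap d))\cap((a\cap d)\sqcup(c\cap d))$ for all $a,b,c,d$. An ado-semilattice is a distributive o-semilattice in which $\sqcup$ is associative. Write $x\lesssim y$ iff $y\sqcup x=y$. A $\lesssim$-ideal is a non-empty subset $I$ that is a down-set under $\lesssim$ with $i\sqcup j\in I$ for all $i,j\in I$; it is relatively maximal if for some $d\in S$, $d\notin I$ and no $\lesssim$-ideal properly containing $I$ omits $d$. A flat ado-semilattice is an algebra $(T,\sqcup,\cap)$ with an element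 $0$ such that $a\cap a=a$, $0\cap a=a\cap 0=0$, $a\cap b=0$ for distinct $a,b$, $0\sqcup a=a$, and $a\sqcup b=a$ whenever $a\neq0$. *)

Set Implicit Arguments.

Section Defs.
Variables (T : Type) (join meet : T -> T -> T).

Definition ole (x y : T) : Prop := x = meet x y.

Definition is_semilattice : Prop :=
  (forall x y z, meet x (meet y z) = meet (meet x y) z) /\
  (forall x y, meet x y = meet y x) /\
  (forall x, meet x x = x).

Definition is_o_semilattice : Prop :=
  is_semilattice /\
  (forall x y, ole x (join x y)) /\
  (forall x y z, ole (join (meet x y) (meet y z)) y) /\
  (forall x y, ole (join x y) (join x (meet y (join x y)))) /\
  (forall x y z, ole (meet x z) (join (meet x y) z)).

Definition is_distributive : Prop :=
  forall a b c d,
    join (meet a d) (meet (meet b d) (meet c d)) =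
    meet (join (meet a d) (meet b d)) (join (meet a d) (meet c d)).

Definition is_ado_semilattice : Prop :=
  is_o_semilattice /\ is_distributive /\
  (forall x y z, join x (join y z) = join (join x y) z).

Definition lesim (x y : T) : Prop := join y x = y.

Definition is_lesim_ideal (I : T -> Prop) : Prop :=
  (exists i, I i) /\
  (forall x y, I y -> lesim x y -> I x) /\
  (forall i j, I i -> I j -> I (join i j)).

Definition properly_contains (J I : T -> Prop) : Prop :=
  (forall x, I x -> J x) /\ (exists x, J x /\ ~ I x).

Definition rel_maximal_ideal (I : T -> Prop) : Prop :=
  is_lesim_ideal I /\
  exists d, ~ I d /\
    forall J, is_lesim_ideal J -> properly_contains J I -> J d.

Definition curlyvee (a b : T) : T := meet (join a b) (join b a).

Definition E_I (I : T -> Prop) (a b : T) : Prop :=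
  ~ I a /\ ~ I b /\ ~ I (curlyvee a b).

Definition eps_I (I : T -> Prop) (a b : T) : Prop :=
  E_I I a b \/ (I a /\ I b).

Definition is_congruence (R : T -> T -> Prop) : Prop :=
  (forall a, R a a) /\
  (forall a b, R a b -> R b a) /\
  (forall a b c, R a b -> R b c -> R a c) /\
  (forall a b c d, R a b -> R c d -> R (join a c) (join b d)) /\
  (forall a b c d, R a b -> R c d -> R (meet a c) (meet b d)).

Definition is_flat (zero : T) : Prop :=
  (forall a, meet a a = a) /\
  (forall a, meet zero a = zero /\ meet a zero = zero) /\
  (forall a b, a <> b -> meet a b = zero) /\
  (forall a, join zero a = a) /\
  (forall a b, a <> zero -> join a b = a).

End Defs.

(* The quotient S/R of (T, join, meet) by a relation R is presented up to
   isomorphism: a type Q with operations and a surjective homomorphism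
   pi : T -> Q whose kernel is exactly R. *)
Definition is_quotient_map (T Q : Type) (joinT meetT : T -> T -> T)
  (joinQ meetQ : Q -> Q -> Q) (R : T -> T -> Prop) (pi : T -> Q) : Prop :=
  (forall q, exists a, pi a = q) /\
  (forall a b, pi (joinT a b) = joinQ (pi a) (pi b)) /\
  (forall a b, pi (meetT a b) = meetQ (pi a) (pi b)) /\
  (forall a b, pi a = pi b <-> R a b).

(* Below any element [w] the algebra is a distributive lattice, and there the meet of two
   elements is also their infimum for the preorder [≲].  If [I] is maximal among the
   [≲]-ideals omitting [d], then every [u ∉ I] yields some [i ∈ I] with [d ≲ i ⊔ u]; for
   [u, v ∉ I] below a common bound, taking the infimum of the two instances and
   distributing shows [u ⊓ v ∉ I], i.e. [I] is prime below every element.  Consequently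
   [ε_I] relates exactly the pairs in [I × I] and the pairs with [a ⊓ b ∉ I]; this is a
   congruence whose classes are [I], the zero of the quotient, and classes outside [I], on
   which [⊔] is the first projection and [⊓] of distinct classes is zero.  Finally, if
   [a ≰ b] then [a ≲ a ⊓ b] fails, and Zorn's lemma extends the ideal [{x | x ≲ a ⊓ b}] to a
   relatively maximal ideal omitting [a]; it separates [a] from [b]. *)

From Stdlib Require Import Classical FunctionalExtensionality PropExtensionality.
From Stdlib Require Import ProofIrrelevance IndefiniteDescription.
From mathcomp Require classical_sets.

Set Implicit Arguments.

Lemma congruence_quotient (T : Type) (join meet : T -> T -> T) (R : T -> T -> Prop) :
  is_congruence join meet R ->
  exists (Q : Type) (joinQ meetQ : Q -> Q -> Q) (pi : T -> Q),
    is_quotient_map join meet joinQ meetQ R pi.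
Proof.
  intros (Rrefl & Rsym & Rtrans & Rjoin & Rmeet).
  set (is_class := fun P : T -> Prop => exists a, P = R a).
  set (pi := fun a => exist is_class (R a) (ex_intro _ a eq_refl)).
  set (rep := fun q : sig is_class =>
         proj1_sig (constructive_indefinite_description _ (proj2_sig q))).
  assert (pi_rep : forall q, pi (rep q) = q).
  { intros q. unfold rep. destruct (constructive_indefinite_description _ _) as [a qa].
    destruct q as [P hP]. apply subset_eq_compat. simpl in *. now symmetry. }
  assert (pi_eq : forall a b, pi a = pi b <-> R a b).
  { intros a b. split.
    - intros e. apply (f_equal (@proj1_sig _ _)) in e. simpl in e. rewrite e. apply Rrefl.
    - intros hab. apply subset_eq_compat. extensionality c.
      apply propositional_extensionality. split; eauto. }
  assert (rep_pi : forall a, R a (rep (pi a))).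
  { intros a. apply Rsym, pi_eq, pi_rep. }
  exists (sig is_class), (fun p q => pi (join (rep p) (rep q))),
    (fun p q => pi (meet (rep p) (rep q))), pi.
  split; [|split; [|split]].
  - intros q. exists (rep q). apply pi_rep.
  - intros a b. apply pi_eq, Rjoin; apply rep_pi.
  - intros a b. apply pi_eq, Rmeet; apply rep_pi.
  - apply pi_eq.
Qed.

Lemma chain_union_ideal (T : Type) (join : T -> T -> T) (F : (T -> Prop) -> Prop) :
  (forall X y, F X -> X y -> is_lesim_ideal join X) ->
  (forall X Y, F X -> F Y -> (forall t, X t -> Y t) \/ (forall t, Y t -> X t)) ->
  (exists X y, F X /\ X y) ->
  is_lesim_ideal join (fun t => exists2 X, F X & X t).
Proof.
  intros ideal_mem chain [X0 [y0 [FX0 X0y0]]].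
  split; [|split].
  - exists y0, X0; assumption.
  - intros x y [X FX Xy] xy. exists X; [assumption|].
    destruct (ideal_mem X y FX Xy) as [_ [down _]]. eauto.
  - intros x y [X FX Xx] [Y FY Yy].
    destruct (chain X Y FX FY) as [XY | YX].
    + exists Y; [assumption|]. destruct (ideal_mem Y y FY Yy) as [_ [_ join_closed]]. auto.
    + exists X; [assumption|]. destruct (ideal_mem X x FX Xx) as [_ [_ join_closed]]. auto.
Qed.

Lemma ideal_extends_rel_maximal (T : Type) (join : T -> T -> T) (J : T -> Prop) x :
  is_lesim_ideal join J -> ~ J x ->
  exists I, rel_maximal_ideal join I /\ (forall y, J y -> I y) /\ ~ I x.
Proof.
  intros idealJ Jx.
  set (extends := fun A : T -> Prop =>
         is_lesim_ideal join A /\ (forall y, J y -> A y) /\ ~ A x).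
  (* Zorn needs the union of the empty chain, hence the empty set is admitted. *)
  set (P := fun A : T -> Prop => (forall y, ~ A y) \/ extends A).
  assert (P_extends : forall A y, P A -> A y -> extends A).
  { intros A y [empty | ext] Ay; [destruct (empty y Ay) | exact ext]. }
  destruct (@classical_sets.Zorn_bigcup T P) as (A & PA & maxA).
  - intros F FP chain.
    destruct (classic (exists X y, F X /\ X y)) as [[X0 [y0 [FX0 X0y0]]] | empty];
      [right | left].
    + split; [|split].
      * apply chain_union_ideal; [| exact chain | eauto].
        intros X y FX Xy. apply (P_extends X y (FP X FX) Xy).
      * intros y Jy. exists X0; [assumption|]. apply (P_extends X0 y0 (FP X0 FX0) X0y0), Jy.
      * intros [X FX Xx]. apply (P_extends X x (FP X FX) Xx), Xx.
    + intros y [X FX Xy]. eauto.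
  - assert (extA : extends A).
    { destruct PA as [empty | ext]; [exfalso | exact ext].
      pose proof idealJ as [[j Jj] _].
      apply (maxA J).
      + split; [intros t At; destruct (empty t At) | intros JA; exact (empty j (JA j Jj))].
      + right. split; [|split]; auto. }
    destruct extA as (idealA & JA & Ax).
    exists A. split; [|split; assumption].
    split; [assumption|]. exists x. split; [assumption|].
    intros K idealK [AK [y [Ky Ay]]]. apply NNPP. intros Kx.
    apply (maxA K); [split; [exact AK | intros KA; exact (Ay (KA y Ky))] |].
    right. split; [|split]; auto.
Qed.

Section AdoSemilattice.
Variables (T : Type) (join meet : T -> T -> T).
Hypothesis ado : is_ado_semilattice join meet.

Local Infix "⊔" := join (at level 50, left associativity).
Local Infix "⊓" := meet (at level 40, left associativity).
Local Notation "x ≤ y" := (ole meet x y) (at level 70).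
Local Notation "x ≲ y" := (lesim join x y) (at level 70).

Lemma meetA x y z : x ⊓ (y ⊓ z) = x ⊓ y ⊓ z.
Proof. destruct ado as [[[assoc _] _] _]. apply assoc. Qed.

Lemma meetC x y : x ⊓ y = y ⊓ x.
Proof. destruct ado as [[[_ [comm _]] _] _]. apply comm. Qed.

Lemma meetxx x : x ⊓ x = x.
Proof. destruct ado as [[[_ [_ idem]] _] _]. apply idem. Qed.

Lemma leUl x y : x ≤ x ⊔ y.
Proof. destruct ado as [[_ [ax _]] _]. apply ax. Qed.

Lemma join_meet_le x y z : x ⊓ y ⊔ y ⊓ z ≤ y.
Proof. destruct ado as [[_ [_ [ax _]]] _]. apply ax. Qed.

Lemma join_le_join_meet x y : x ⊔ y ≤ x ⊔ y ⊓ (x ⊔ y).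
Proof. destruct ado as [[_ [_ [_ [ax _]]]] _]. apply ax. Qed.

Lemma meet_le_join_meet x y z : x ⊓ z ≤ x ⊓ y ⊔ z.
Proof. destruct ado as [[_ [_ [_ [_ ax]]]] _]. apply ax. Qed.

Lemma joinIr_meet a b c d :
  a ⊓ d ⊔ b ⊓ d ⊓ (c ⊓ d) = (a ⊓ d ⊔ b ⊓ d) ⊓ (a ⊓ d ⊔ c ⊓ d).
Proof. destruct ado as [_ [distr _]]. apply distr. Qed.

Lemma joinA x y z : x ⊔ (y ⊔ z) = x ⊔ y ⊔ z.
Proof. destruct ado as [_ [_ assoc]]. apply assoc. Qed.

Lemma meetIIr x y z : x ⊓ z ⊓ (y ⊓ z) = x ⊓ z ⊓ y.
Proof.
  rewrite meetA, <- (meetA x z y), (meetC z y), !meetA, <- (meetA (x ⊓ y) z z), meetxx.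
  now rewrite <- meetA, (meetC y z), meetA.
Qed.

Lemma meet_l x y : x ≤ y -> x ⊓ y = x.
Proof. intros h. now symmetry. Qed.

Lemma meet_r x y : x ≤ y -> y ⊓ x = x.
Proof. intros h. rewrite meetC. now apply meet_l. Qed.

Lemma le_refl x : x ≤ x.
Proof. unfold ole. now rewrite meetxx. Qed.

Lemma le_trans x y z : x ≤ y -> y ≤ z -> x ≤ z.
Proof. unfold ole. intros xy yz. rewrite xy at 1. rewrite yz, meetA, <- xy. reflexivity. Qed.

Lemma le_anti x y : x ≤ y -> y ≤ x -> x = y.
Proof. intros xy yx. rewrite xy, meetC. now apply meet_l. Qed.

Lemma leIl x y : x ⊓ y ≤ x.
Proof. unfold ole. now rewrite (meetC (x ⊓ y) x), meetA, meetxx. Qed.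

Lemma leIr x y : x ⊓ y ≤ y.
Proof. unfold ole. now rewrite <- meetA, meetxx. Qed.

Lemma lexI x y z : z ≤ x -> z ≤ y -> z ≤ x ⊓ y.
Proof. unfold ole. intros zx zy. now rewrite meetA, <- zx. Qed.

Lemma joinxx x : x ⊔ x = x.
Proof.
  apply le_anti; [|apply leUl].
  pose proof (join_meet_le x x x) as h. now rewrite meetxx in h.
Qed.

(* Suffix [_under]: for elements with a common upper bound [w]; the principal ideal
   [↓w] is a distributive lattice under [⊔] and [⊓]. *)

Lemma leUx u v w : u ≤ w -> v ≤ w -> u ⊔ v ≤ w.
Proof.
  intros uw vw. pose proof (join_meet_le u w v) as h.
  now rewrite (meet_l uw), (meet_r vw) in h.
Qed.

Lemma leUr_under u v w : u ≤ w -> v ≤ w -> v ≤ u ⊔ v.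
Proof.
  intros uw vw. pose proof (meet_le_join_meet w u v) as h.
  now rewrite (meet_r uw), (meet_r vw) in h.
Qed.

Lemma joinC_under u v w : u ≤ w -> v ≤ w -> u ⊔ v = v ⊔ u.
Proof.
  intros uw vw. apply le_anti; apply leUx.
  - apply (leUr_under vw uw).
  - apply leUl.
  - apply (leUr_under uw vw).
  - apply leUl.
Qed.

Lemma join_l u v : u ≤ v -> v ⊔ u = v.
Proof. intros uv. apply le_anti; [apply (leUx (le_refl v) uv) | apply leUl]. Qed.

Lemma join_r u v : u ≤ v -> u ⊔ v = v.
Proof.
  intros uv. apply le_anti; [apply (leUx uv (le_refl v)) | apply (leUr_under uv (le_refl v))].
Qed.

Lemma join_trim x y : x ⊔ y = x ⊔ y ⊓ (x ⊔ y).
Proof. apply le_anti; [apply join_le_join_meet | apply (leUx (leUl x y) (leIr _ _))]. Qed.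

Lemma joinIr_under a b c w :
  a ≤ w -> b ≤ w -> c ≤ w -> a ⊔ b ⊓ c = (a ⊔ b) ⊓ (a ⊔ c).
Proof.
  intros aw bw cw. pose proof (joinIr_meet a b c w) as h.
  now rewrite (meet_l aw), (meet_l bw), (meet_l cw) in h.
Qed.

Lemma meetUr_under x y z w :
  x ≤ w -> y ≤ w -> z ≤ w -> x ⊓ (y ⊔ z) = x ⊓ y ⊔ x ⊓ z.
Proof.
  intros xw yw zw.
  assert (xyw : x ⊓ y ≤ w) by exact (le_trans (leIl x y) xw).
  rewrite (joinIr_under xyw xw zw), (join_r (leIl x y)), (joinC_under xyw zw).
  rewrite (joinIr_under zw xw yw), (joinC_under zw xw), (joinC_under zw yw).
  now rewrite meetA, (meet_l (leUl x z)).
Qed.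

Lemma lesim_refl x : x ≲ x.
Proof. apply joinxx. Qed.

Lemma lesim_trans x y z : x ≲ y -> y ≲ z -> x ≲ z.
Proof. unfold lesim. intros xy yz. now rewrite <- yz, <- joinA, xy. Qed.

Lemma le_lesim x y : x ≤ y -> x ≲ y.
Proof. apply join_l. Qed.

Lemma lesim_joinl x y : x ≲ x ⊔ y.
Proof. apply le_lesim, leUl. Qed.

Lemma lesim_joinr x y : y ≲ x ⊔ y.
Proof. unfold lesim. now rewrite <- joinA, joinxx. Qed.

Lemma lesim_join x y z : x ≲ z -> y ≲ z -> x ⊔ y ≲ z.
Proof. unfold lesim. intros xz yz. now rewrite joinA, xz, yz. Qed.

Lemma lesim_join2 x x' y y' : x ≲ x' -> y ≲ y' -> x ⊔ y ≲ x' ⊔ y'.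
Proof.
  intros xx' yy'. apply lesim_join.
  - exact (lesim_trans xx' (lesim_joinl x' y')).
  - exact (lesim_trans yy' (lesim_joinr x' y')).
Qed.

Lemma le_lesim_under x y w : x ≤ w -> y ≤ w -> x ≲ y -> x ≤ y.
Proof.
  unfold lesim. intros xw yw yx. pose proof (leUl x y) as h.
  now rewrite (joinC_under xw yw), yx in h.
Qed.

Lemma meet_joinl_lesim y p z : y ≲ p -> y ⊓ (p ⊔ z) = y ⊓ p.
Proof.
  intros yp. apply le_anti; apply lexI; try apply leIl.
  - apply (le_lesim_under (leIr y (p ⊔ z)) (leUl p z)).
    exact (lesim_trans (le_lesim (leIl y _)) yp).
  - exact (le_trans (leIr y p) (leUl p z)).
Qed.

Lemma le_of_lesim_over_meet A B w t :
  A ≤ w -> B ≤ w -> t ≲ A -> t ≲ B -> A ⊓ B ≤ t -> t ≤ A.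
Proof.
  intros Aw Bw tA tB ABt.
  set (L := A ⊔ B). set (R := t ⊔ A).
  assert (AL : A ≤ L) by apply leUl.
  assert (BL : B ≤ L) by exact (leUr_under Aw Bw).
  assert (RA : R ≲ A).
  { unfold lesim, R. rewrite joinA. unfold lesim in tA. rewrite tA. apply joinxx. }
  assert (BR : B ⊔ R = L).
  { unfold R, L. rewrite joinA. unfold lesim in tB. rewrite tB. apply (joinC_under Bw Aw). }
  assert (L_trim : L = B ⊔ R ⊓ A).
  { rewrite <- (meet_joinl_lesim B RA). fold L. rewrite <- BR at 2. rewrite <- join_trim.
    now symmetry. }
  assert (RAL : R ⊓ A ≤ L) by exact (le_trans (leIr R A) AL).
  (* [A = A ⊓ L = (A ⊓ B) ⊔ (R ⊓ A) = R ⊓ A] by distributivity below [L]. *)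
  assert (A_R : A = R ⊓ A).
  { transitivity (A ⊓ (B ⊔ R ⊓ A)); [rewrite <- L_trim; symmetry; exact (meet_l AL)|].
    rewrite (meetUr_under AL BL RAL), (meet_r (leIr R A)).
    apply join_r, lexI; [exact (le_trans ABt (leUl t A)) | apply leIl]. }
  apply (le_lesim_under (leUl t A)); [|exact tA].
  unfold ole. now rewrite meetC.
Qed.

Lemma lesim_meet A B w y : A ≤ w -> B ≤ w -> y ≲ A -> y ≲ B -> y ≲ A ⊓ B.
Proof.
  intros Aw Bw yA yB.
  set (t := A ⊓ B ⊔ y).
  assert (tA : t ≲ A) by exact (lesim_join (le_lesim (leIl A B)) yA).
  assert (tB : t ≲ B) by exact (lesim_join (le_lesim (leIr A B)) yB).
  assert (ABt : A ⊓ B ≤ t) by apply leUl.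
  assert (BAt : B ⊓ A ≤ t) by now rewrite meetC.
  pose proof (le_of_lesim_over_meet Aw Bw tA tB ABt) as t_A.
  pose proof (le_of_lesim_over_meet Bw Aw tB tA BAt) as t_B.
  unfold lesim. symmetry. exact (le_anti ABt (lexI t_A t_B)).
Qed.

Definition eps_meet (I : T -> Prop) a b := (I a /\ I b) \/ ~ I (a ⊓ b).

Lemma eps_meet_refl I a : eps_meet I a a.
Proof. unfold eps_meet. rewrite meetxx. destruct (classic (I a)); auto. Qed.

Lemma eps_meet_sym I a b : eps_meet I a b -> eps_meet I b a.
Proof. unfold eps_meet. rewrite meetC. tauto. Qed.

Lemma lesim_ideal_down c : is_lesim_ideal join (fun x => x ≲ c).
Proof.
  split; [|split].
  - exists c. apply lesim_refl.
  - intros x y yc xy. exact (lesim_trans xy yc).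
  - intros x y xc yc. exact (lesim_join xc yc).
Qed.

Section Ideal.
Variable I : T -> Prop.
Hypothesis idealI : is_lesim_ideal join I.

Lemma ideal_lesim x y : I y -> x ≲ y -> I x.
Proof. destruct idealI as [_ [down _]]. eauto. Qed.

Lemma ideal_le x y : I y -> x ≤ y -> I x.
Proof. intros Iy xy. exact (ideal_lesim Iy (le_lesim xy)). Qed.

Lemma ideal_join x y : I x -> I y -> I (x ⊔ y).
Proof. destruct idealI as [_ [_ join_closed]]. auto. Qed.

Lemma notin_ideal_meetl x y : ~ I (x ⊓ y) -> ~ I x.
Proof. intros nxy Ix. exact (nxy (ideal_le Ix (leIl x y))). Qed.

Lemma notin_ideal_meetr x y : ~ I (x ⊓ y) -> ~ I y.
Proof. intros nxy Iy. exact (nxy (ideal_le Iy (leIr x y))). Qed.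

Lemma eps_meet_notin a b : eps_meet I a b -> ~ I a -> ~ I (a ⊓ b).
Proof. intros [[Ia _] | nab] na; [contradiction | exact nab]. Qed.

Lemma eps_meet_joinl a c : ~ I a -> eps_meet I (a ⊔ c) a.
Proof. intros na. right. now rewrite meetC, (meet_l (leUl a c)). Qed.

Lemma eps_meet_join_ideal a c : I a -> eps_meet I (a ⊔ c) c.
Proof.
  intros Ia. destruct (classic (I c)) as [Ic | nc].
  - left. split; [apply ideal_join|]; assumption.
  - right. intros Iac. apply nc, (ideal_lesim (y := a ⊔ c)); [|apply lesim_joinr].
    rewrite join_trim. apply ideal_join; [exact Ia | now rewrite meetC].
Qed.

Section RelMaximal.
Variable d : T.
Hypothesis dI : ~ I d.
Hypothesis maxI : forall J, is_lesim_ideal join J -> properly_contains J I -> J d.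

Lemma rel_maximal_reaches u : ~ I u -> exists i, I i /\ d ≲ i ⊔ u.
Proof.
  intros nu. pose proof idealI as [[i0 Ii0] _].
  apply (maxI (J := fun x => exists i, I i /\ x ≲ i ⊔ u)).
  - split; [|split].
    + exists u, i0. split; [exact Ii0 | apply lesim_joinr].
    + intros x y [i [Ii yi]] xy. exists i. split; [exact Ii | exact (lesim_trans xy yi)].
    + intros x y [i [Ii xi]] [i' [Ii' yi']]. exists (i ⊔ i').
      split; [apply ideal_join; assumption|].
      apply lesim_join.
      * exact (lesim_trans xi (lesim_join2 (lesim_joinl i i') (lesim_refl u))).
      * exact (lesim_trans yi' (lesim_join2 (lesim_joinr i i') (lesim_refl u))).
  - split.
    + intros x Ix. exists x. split; [exact Ix | apply lesim_joinl].
    + exists u. split; [|exact nu]. exists i0. split; [exact Ii0 | apply lesim_joinr].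
Qed.

Lemma rel_maximal_meet_notin u v w : u ≤ w -> v ≤ w -> ~ I u -> ~ I v -> ~ I (u ⊓ v).
Proof.
  intros uw vw nu nv Iuv.
  destruct (rel_maximal_reaches nu) as [i [Ii d_iu]].
  destruct (rel_maximal_reaches nv) as [i' [Ii' d_iv]].
  set (k := i ⊔ i').
  assert (Ik : I k) by (apply ideal_join; assumption).
  (* Replacing [u], [v] by [u' = u ⊓ W], [v' = v ⊓ W] does not change [k ⊔ u], [k ⊔ v] and
     puts everything below [W], where [d ≲ (k ⊔ u') ⊓ (k ⊔ v') = k ⊔ u' ⊓ v' ∈ I]. *)
  set (W := k ⊔ (u ⊔ v)).
  assert (ku : k ⊔ u = k ⊔ u ⊓ W).
  { unfold W. rewrite joinA, (meet_joinl_lesim v (lesim_joinr k u)). apply join_trim. }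
  assert (kv : k ⊔ v = k ⊔ v ⊓ W).
  { unfold W. rewrite (joinC_under uw vw), joinA, (meet_joinl_lesim u (lesim_joinr k v)).
    apply join_trim. }
  assert (d_ku : d ≲ k ⊔ u ⊓ W).
  { rewrite <- ku. exact (lesim_trans d_iu (lesim_join2 (lesim_joinl i i') (lesim_refl u))). }
  assert (d_kv : d ≲ k ⊔ v ⊓ W).
  { rewrite <- kv. exact (lesim_trans d_iv (lesim_join2 (lesim_joinr i i') (lesim_refl v))). }
  assert (kW : k ≤ W) by apply leUl.
  assert (uW : u ⊓ W ≤ W) by apply leIr.
  assert (vW : v ⊓ W ≤ W) by apply leIr.
  pose proof (lesim_meet (leUx kW uW) (leUx kW vW) d_ku d_kv) as d_kuv.
  rewrite <- (joinIr_under kW uW vW) in d_kuv.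
  apply dI, (ideal_lesim (y := k ⊔ u ⊓ v)); [now apply ideal_join|].
  apply (lesim_trans d_kuv), lesim_join2; [apply lesim_refl | apply le_lesim].
  apply lexI; [exact (le_trans (leIl _ _) (leIl u W)) | exact (le_trans (leIr _ _) (leIl v W))].
Qed.

Lemma eps_IE a b : eps_I join meet I a b <-> eps_meet I a b.
Proof.
  unfold eps_I, E_I, eps_meet, curlyvee. split.
  - intros [(na & nb & nab) | both]; [right | left; exact both]. intros Iab.
    set (w := (a ⊔ b) ⊓ (b ⊔ a)) in *.
    assert (nwa : ~ I (w ⊓ a)) by exact (rel_maximal_meet_notin (leIl _ _) (leUl a b) nab na).
    assert (nwb : ~ I (w ⊓ b)) by exact (rel_maximal_meet_notin (leIr _ _) (leUl b a) nab nb).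
    apply (rel_maximal_meet_notin (leIl w a) (leIl w b) nwa nwb), (ideal_le Iab).
    apply lexI; [exact (le_trans (leIl _ _) (leIr w a)) | exact (le_trans (leIr _ _) (leIr w b))].
  - intros [both | nab]; [right; exact both | left].
    split; [exact (notin_ideal_meetl nab) | split; [exact (notin_ideal_meetr nab) |]].
    intros Iw. apply nab, (ideal_le Iw).
    apply lexI; [exact (le_trans (leIl a b) (leUl a b)) | exact (le_trans (leIr a b) (leUl b a))].
Qed.

Lemma eps_meet_trans a b c : eps_meet I a b -> eps_meet I b c -> eps_meet I a c.
Proof.
  intros [[Ia Ib] | nab] [[Ib' Ic] | nbc].
  - left. split; assumption.
  - destruct (notin_ideal_meetl nbc Ib).
  - destruct (notin_ideal_meetr nab Ib').
  - right. intros Iac.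
    apply (rel_maximal_meet_notin (leIr a b) (leIl b c) nab nbc), (ideal_le Iac).
    apply lexI; [exact (le_trans (leIl _ _) (leIl a b)) | exact (le_trans (leIr _ _) (leIr b c))].
Qed.

Lemma eps_meet_join a b c e :
  eps_meet I a b -> eps_meet I c e -> eps_meet I (a ⊔ c) (b ⊔ e).
Proof.
  intros ab ce. destruct ab as [[Ia Ib] | nab].
  - apply (eps_meet_trans (eps_meet_join_ideal c Ia)), (eps_meet_trans ce).
    exact (eps_meet_sym (eps_meet_join_ideal e Ib)).
  - apply (eps_meet_trans (eps_meet_joinl c (notin_ideal_meetl nab))).
    apply (eps_meet_trans (or_intror nab)).
    exact (eps_meet_sym (eps_meet_joinl e (notin_ideal_meetr nab))).
Qed.

Lemma eps_meet_meetr a b c : eps_meet I a b -> eps_meet I (a ⊓ c) (b ⊓ c).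
Proof.
  (* If [a ⊓ c ∉ I], then [a ⊓ c ~ a ~ b], and [(a ⊓ c) ⊓ (b ⊓ c) = (a ⊓ c) ⊓ b]. *)
  assert (key : forall x y, eps_meet I x y -> ~ I (x ⊓ c) -> ~ I (x ⊓ c ⊓ (y ⊓ c))).
  { intros x y xy nxc.
    assert (xc_x : eps_meet I (x ⊓ c) x).
    { right. now rewrite meetC, meetA, meetxx. }
    rewrite meetIIr.
    exact (eps_meet_notin (eps_meet_trans xc_x xy) nxc). }
  intros ab.
  destruct (classic (I (a ⊓ c))) as [Iac | nac];
    [destruct (classic (I (b ⊓ c))) as [Ibc | nbc] |].
  - left. split; assumption.
  - apply eps_meet_sym. right. exact (key b a (eps_meet_sym ab) nbc).
  - right. exact (key a b ab nac).
Qed.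

Lemma eps_I_congruence : is_congruence join meet (eps_I join meet I).
Proof.
  split; [|split; [|split; [|split]]].
  - intros a. apply eps_IE, eps_meet_refl.
  - intros a b. rewrite !eps_IE. apply eps_meet_sym.
  - intros a b c. rewrite !eps_IE. apply eps_meet_trans.
  - intros a b c e. rewrite !eps_IE. apply eps_meet_join.
  - intros a b c e. rewrite !eps_IE. intros ab ce.
    apply (eps_meet_trans (eps_meet_meetr c ab)).
    rewrite (meetC b c), (meetC b e). exact (eps_meet_meetr b ce).
Qed.

Lemma quotient_flat (Q : Type) (joinQ meetQ : Q -> Q -> Q) (pi : T -> Q) i0 :
  is_quotient_map join meet joinQ meetQ (eps_I join meet I) pi -> I i0 ->
  is_flat joinQ meetQ (pi i0).
Proof.
  intros (surj & pi_join & pi_meet & pi_eq) Ii0.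
  assert (pi_eqE : forall a b, pi a = pi b <-> eps_meet I a b).
  { intros a b. rewrite pi_eq. apply eps_IE. }
  assert (pi_zero : forall a, I a -> pi a = pi i0).
  { intros a Ia. apply pi_eqE. left. split; assumption. }
  split; [|split; [|split; [|split]]].
  - intros q. destruct (surj q) as [a <-]. now rewrite <- pi_meet, meetxx.
  - intros q. destruct (surj q) as [a <-]. rewrite <- !pi_meet.
    split; apply pi_zero; [exact (ideal_le Ii0 (leIl i0 a)) | exact (ideal_le Ii0 (leIr a i0))].
  - intros q r. destruct (surj q) as [a <-], (surj r) as [b <-]. intros ne. rewrite <- pi_meet.
    apply pi_zero, NNPP. intros nab. apply ne, pi_eqE. now right.
  - intros q. destruct (surj q) as [a <-]. rewrite <- pi_join.
    apply pi_eqE, eps_meet_join_ideal, Ii0.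
  - intros q r. destruct (surj q) as [a <-], (surj r) as [b <-]. intros ne. rewrite <- pi_join.
    apply pi_eqE, eps_meet_joinl. intros Ia. exact (ne (pi_zero a Ia)).
Qed.

End RelMaximal.
End Ideal.

Lemma lesim_meet_le a b : a ≲ a ⊓ b -> a ≤ b.
Proof. unfold lesim, ole. now rewrite (join_r (leIl a b)). Qed.

Lemma rel_maximal_separate_le a b :
  (forall I, rel_maximal_ideal join I -> eps_I join meet I a b) -> a ≤ b.
Proof.
  intros sep. apply lesim_meet_le, NNPP. intros na.
  destruct (ideal_extends_rel_maximal a (lesim_ideal_down (a ⊓ b)) na) as (I & relI & sub & aI).
  pose proof (sep I relI) as ab. destruct relI as [idealI (d & dI & maxI)].
  apply (eps_IE idealI dI maxI) in ab.
  destruct ab as [[Ia _] | nab]; [contradiction | exact (nab (sub _ (lesim_refl _)))].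
Qed.

Lemma rel_maximal_separate a b :
  (forall I, rel_maximal_ideal join I -> eps_I join meet I a b) -> a = b.
Proof.
  intros sep. apply le_anti; apply rel_maximal_separate_le; [exact sep|].
  intros I relI. pose proof relI as [idealI (d & dI & maxI)].
  destruct (eps_I_congruence idealI dI maxI) as [_ [eps_sym _]]. exact (eps_sym _ _ (sep I relI)).
Qed.

End AdoSemilattice.

Theorem lemma4p9 (T : Type) (join meet : T -> T -> T) :
  is_ado_semilattice join meet ->
  (forall I : T -> Prop, rel_maximal_ideal join I ->
     is_congruence join meet (eps_I join meet I) /\
     exists (Q : Type) (joinQ meetQ : Q -> Q -> Q) (zeroQ : Q) (pi : T -> Q),
       is_quotient_map join meet joinQ meetQ (eps_I join meet I) pi /\
       is_flat joinQ meetQ zeroQ) /\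
  (forall a b : T,
     (forall I : T -> Prop, rel_maximal_ideal join I -> eps_I join meet I a b) ->
     a = b).
Proof.
  intros ado. split; [|exact (rel_maximal_separate ado)].
  intros I [idealI (d & dI & maxI)].
  pose proof (eps_I_congruence ado idealI dI maxI) as congr.
  split; [exact congr|].
  destruct (congruence_quotient congr) as (Q & joinQ & meetQ & pi & quot).
  pose proof idealI as [[i0 Ii0] _].
  exists Q, joinQ, meetQ, (pi i0), pi.
  split; [exact quot | exact (quotient_flat ado idealI dI maxI i0 quot Ii0)].
Qed.
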